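(* Let $\lambda\geq\kappa$ be regular infinite cardinals. Let $\mathcal{L}$ be a distributive lattice which, regarded as a (poset) category, is $(\lambda,\kappa)$-coherent, and let $(A_i)_{i<\kappa}$ be a collection of subsets of $\mathcal{L}$, each of cardinality $<\lambda$. Then there is a set $X$ and an injective order-preserving map $\mathcal{L}\hookrightarrow\mathcal{P}(X)$ into the power set Boolean algebra which preserves all meets of fewer than $\kappa$ elements and which, for each $i<\kappa$, preserves the join $\bigcup A_i$.
   Context: A category $\mathcal{C}$ is $(\lambda,\kappa)$-coherent if: (i) it has all limits of diagrams with fewer than $\kappa$ morphisms; (ii) it has pullback-stable effective epi–mono factorizations; (iii) it has pullback-stable unions of fewer than $\lambda$ subobjects; (iv) for every rooted cotree in $\mathcal{C}$ (a diagram indexed by the opposite of a rooted tree, with arrows from the immediate successors of each node into it) such that at each node having immediate successors these form an extremal epimorphic family with fewer than $\lambda$ members, every branch has length $<\kappa$, and every branch is continuous (objects at limit positions are limits of the preceding objects), the family of transfinite cocompositions of the branches (limit of the branch with its map to the root) is extremal epimorphic on the root. A family $(f_i:x_i\to y)$ is extremal epimorphic if it does not factor through any proper subobject of $y$. *)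

From HB Require Import structures.
From mathcomp Require Import all_boot all_order.
From mathcomp Require Import boolp classical_sets functions cardinality.
Set Implicit Arguments. Unset Strict Implicit. Unset Printing Implicit Defensive.
Import Order.TTheory.
Local Open Scope classical_set_scope.
Local Open Scope order_scope.
Local Open Scope card_scope.

(* ---------- Cardinals ----------
   A cardinal is represented by a type of that cardinality.
   "fewer than kappa" for a set A means  A #< [set: K]. *)
Definition card_lt (T U : Type) (A : set T) (B : set U) : Prop :=
  (A #<= B) /\ ~ (B #<= A).

Definition regular_cardinal (K : Type) : Prop :=
  infinite_set [set: K] /\
  forall (I : Type) (F : I -> set K),
    card_lt [set: I] [set: K] ->
    (forall i, card_lt (F i) [set: K]) ->
    \bigcup_(i in [set: I]) F i <> [set: K].

Section PosetNotions.
Context {d : Order.disp_t} {L : porderType d}.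

Definition is_lb (S : set L) (x : L) := forall y, S y -> x <= y.
Definition is_ub (S : set L) (x : L) := forall y, S y -> y <= x.
(* limit of a diagram in a poset = greatest lower bound of its objects *)
Definition is_glb (S : set L) (x : L) :=
  is_lb S x /\ forall z, is_lb S z -> z <= x.
Definition is_lub (S : set L) (x : L) :=
  is_ub S x /\ forall z, is_ub S z -> x <= z.

(* (i) all limits of diagrams with fewer than kappa morphisms.  A diagram
   J -> L in a poset category has a limit iff the set of its objects has a
   glb; the arrows of J play no role (all cones commute). *)
Definition has_small_limits (K : Type) : Prop :=
  forall (J : Type) (D : J -> L),
    card_lt [set: J] [set: K] -> exists g, is_glb (range D) g.

(* x -> y is an effective epimorphism: y is the coequalizer of the kernel
   pair of x -> y (the kernel pair is x => x, so its coequalizer is the least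
   object receiving a map from x). *)
Definition eff_epi (x y : L) := x <= y /\ forall c, x <= c -> y <= c.

Definition extremal_epi (S : set L) (y : L) :=
  forall m, m <= y -> (forall s, S s -> s <= m) -> m = y.

Definition is_union_in (y : L) (S : set L) (u : L) :=
  u <= y /\ is_ub S u /\ forall m, m <= y -> is_ub S m -> u <= m.
End PosetNotions.

Section LatticeNotions.
Context {d : Order.disp_t} {L : latticeType d}.

(* (ii) pullback-stable (effective epi, mono) factorizations.  Every
   morphism of a poset is monic; pullbacks are binary meets. *)
Definition has_stable_image_factorizations : Prop :=
  forall x y : L, x <= y ->
    exists m : L, eff_epi x m /\ m <= y /\
      forall z : L, z <= y -> eff_epi (x `&` z) (m `&` z).

Definition has_stable_unions (Lam : Type) : Prop :=
  forall (J : Type) (S : J -> L) (y : L),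
    card_lt [set: J] [set: Lam] -> (forall j, S j <= y) ->
    exists u : L, is_union_in y (range S) u /\
      forall z : L, z <= y ->
        is_union_in z (range (fun j => z `&` S j)) (z `&` u).
End LatticeNotions.

Section Trees.
Context {T : Type} (lt : T -> T -> Prop) (r : T).

Definition rooted_tree : Prop :=
  (forall t, ~ lt t t) /\
  (forall a b c, lt a b -> lt b c -> lt a c) /\
  (forall t, t = r \/ lt r t) /\
  (forall t s s', lt s t -> lt s' t -> s = s' \/ lt s s' \/ lt s' s) /\
  well_founded lt.

Definition imm_succ (t s : T) : Prop :=
  lt t s /\ ~ (exists u, lt t u /\ lt u s).

Definition is_chain (B : set T) : Prop :=
  forall a b, B a -> B b -> a = b \/ lt a b \/ lt b a.

Definition is_branch (B : set T) : Prop :=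
  is_chain B /\
  forall t, (forall b, B b -> t = b \/ lt t b \/ lt b t) -> B t.

Definition limit_position (t : T) : Prop :=
  t <> r /\ forall u, lt u t -> exists v, lt u v /\ lt v t.
End Trees.

Definition cotree_condition {d : Order.disp_t} (L : porderType d)
    (K Lam : Type) : Prop :=
  forall (T : Type) (lt : T -> T -> Prop) (r : T) (x : T -> L),
    rooted_tree lt r ->
    (* x is a diagram indexed by the opposite of the tree *)
    (forall s t, lt t s -> x s <= x t) ->
    (forall t, (exists s, imm_succ lt t s) ->
       card_lt [set s | imm_succ lt t s] [set: Lam] /\
       extremal_epi [set x s | s in [set s | imm_succ lt t s]] (x t)) ->
    (forall B, is_branch lt B -> card_lt B [set: K]) ->
    (forall B, is_branch lt B -> forall t, B t -> limit_position lt r t ->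
       is_glb [set x s | s in [set s | B s /\ lt s t]] (x t)) ->
    extremal_epi
      [set c | exists B, is_branch lt B /\ is_glb [set x b | b in B] c] (x r).

Definition coherent {d : Order.disp_t} (L : latticeType d)
    (Lam K : Type) : Prop :=
  has_small_limits (L := L) K /\
  has_stable_image_factorizations (L := L) /\
  has_stable_unions (L := L) Lam /\
  cotree_condition L K Lam.

From HB Require Import structures.
From mathcomp Require Import all_boot all_order.
From mathcomp Require Import boolp classical_sets functions cardinality wochoice.
From Stdlib Require Import Inclusion Inverse_Image.
Set Implicit Arguments. Unset Strict Implicit. Unset Printing Implicit Defensive.
Import Order.TTheory.
Local Open Scope classical_set_scope.
Local Open Scope order_scope.
Local Open Scope card_scope.

(* L is represented by its complete prime upsets: upsets closed under meets of
   fewer than kappa elements that contain a member of A_i whenever they contain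
   the join of A_i.  It suffices to separate x from y whenever x is not below y.

   Well-order the indices in order type kappa and consider runs: decreasing
   sequences starting at x which at a successor stage meet the current element
   with a member of A_i for the least index i still pending (the current element
   lies below the join of A_i, but no element so far lies below a member of A_i),
   and take meets at limit stages.  The upset generated by a run of length kappa
   that never drops below y separates x from y: an index pending from some stage
   on would make the least pending indices of the later stages pairwise distinct
   and smaller than it, against the regularity of kappa.

   Partial runs that have not yet dropped below y form a cotree; pullback-stable
   unions make its successor families extremal epimorphic.  If no run reached
   length kappa, all branches would be shorter than kappa, each branch limit
   would lie below y (otherwise the branch could be prolonged), and the cotree
   condition would give x <= y. *)

Lemma card_le_inj_on T U (A : set T) (B : set U) (f : T -> U) :
  (forall a, A a -> B (f a)) -> {in A &, injective f} -> A #<= B.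
Proof.
move=> fAB /inj_card_eq; rewrite card_eq_le => /andP[_ AfA].
by apply: card_le_trans AfA _; apply: subset_card_le => _ [a Aa <-]; apply: fAB.
Qed.

Lemma card_le_setT_inj T U (B : set U) : [set: T] #<= B ->
  exists2 f : T -> U, (forall a, B (f a)) & injective f.
Proof.
move=> /card_leP[f]; pose g a := f (exist _ a (mem_set I) : [set: T]).
exists (fun a => val (g a)) => [a|a b /val_inj/(@inj _ _ _ f) ab].
  exact: set_mem (valP (g a)).
by have [] := ab (mem_set I) (mem_set I).
Qed.

Lemma card_le_lt_trans T U V (A : set T) (B : set U) (C : set V) :
  A #<= B -> card_lt B C -> card_lt A C.
Proof.
move=> AB [BC nCB]; split; first exact: card_le_trans AB BC.
by move=> CA; apply: nCB; apply: card_le_trans CA AB.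
Qed.

Lemma finite_card_lt T U (A : set T) : infinite_set [set: U] -> finite_set A ->
  card_lt A [set: U].
Proof.
move=> infU finA; split; last by move=> UA; apply: infU; apply: card_le_finite UA finA.
have /infiniteP natU := infU; case: finA => n /card_eqPle[An _].
by apply: card_le_trans An (card_le_trans (subset_card_le _) natU).
Qed.

Section RegularCardinal.
Variable K : Type.
Hypothesis regK : regular_cardinal K.

Lemma regular_cardinal_infinite : infinite_set [set: K].
Proof. by case: regK. Qed.

Lemma regular_cardinal_bounded (J : Type) (F : J -> set K) :
  card_lt [set: J] [set: K] -> (forall j, card_lt (F j) [set: K]) ->
  exists k, forall j, ~ F j k.
Proof.
move=> smallJ smallF; apply: contrapT => /forallNP unbounded.
apply: (proj2 regK J F smallJ smallF); apply/seteqP; split => // k _.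
by have /existsNP[j /contrapT] := unbounded k; exists j.
Qed.

Lemma regular_cardinal_setU (P Q : set K) :
  card_lt P [set: K] -> card_lt Q [set: K] -> P `|` Q <> [set: K].
Proof.
move=> smallP smallQ PQ.
have smallB : card_lt [set: bool] [set: K].
  exact: finite_card_lt regular_cardinal_infinite finite_finset.
have [k nPQ] := regular_cardinal_bounded (F := fun b : bool => if b then P else Q)
  smallB (fun b => if b as b return card_lt (if b then P else Q) _ then smallP else smallQ).
have : (P `|` Q) k by rewrite PQ.
by case=> [Pk|Qk]; [apply: (nPQ true)|apply: (nPQ false)].
Qed.

End RegularCardinal.

Definition strict_well_order T (lt : T -> T -> Prop) :=
  [/\ forall i j k, lt i j -> lt j k -> lt i k,
      forall i j, i <> j -> lt i j \/ lt j i & well_founded lt].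

Lemma strict_well_order_exists T : exists lt : T -> T -> Prop, strict_well_order lt.
Proof.
have [R woR] := well_ordering_principle {classic T}.
have woC : wo_chain R predT by move=> A _; apply: woR.
have Rtotal := wo_chainW woC.
have Ranti i j : R i j -> R j i -> i = j.
  by move=> Rij Rji; apply: (wo_chain_antisymmetric woC) => //; rewrite Rij Rji.
have Rmin (P : T -> Prop) : (exists z, P z) -> exists2 z, P z & forall w, P w -> R z w.
  move=> [z Pz]; have : nonempty [pred w | `[< P w >]].
    by exists z; apply/asboolP.
  move=> /woR[m [[Pm minm] _]].
  by exists m => [|w Pw]; [exact/asboolP|apply: minm; apply/asboolP].
have Rtrans i j k : R i j -> R j k -> R i k.
  move=> Rij Rjk; pose P z := z = i \/ z = j \/ z = k.
  have [z [->|[->|->]] minz] := Rmin P (ex_intro _ i (or_introl erefl)).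
  - by apply: minz; right; right.
  - by rewrite (Ranti i j Rij) //; apply: minz; left.
  - by rewrite -(Ranti j k Rjk) //; apply: minz; right; left.
exists (fun i j => R i j /\ i <> j); split.
- move=> i j k [Rij nij] [Rjk njk]; split; first exact: Rtrans Rjk.
  by move=> ik; subst k; apply: nij; apply: Ranti.
- move=> i j nij; have /orP[Rij|Rji] := Rtotal i j isT isT; [left|right] => //.
  by split=> // ji; apply: nij.
- move=> a; apply: contrapT => nAcc.
  have [m nAccm minm] := Rmin (fun z => ~ Acc _ z) (ex_intro _ a nAcc).
  apply: nAccm; constructor => z [Rzm nzm]; apply: contrapT => nAccz.
  by apply: nzm; apply: Ranti => //; apply: minm.
Qed.

(* Proper initial segments are smaller than K: the order type is the initial
   ordinal of the cardinality of K. *)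
Definition small_well_order K (lt : K -> K -> Prop) :=
  strict_well_order lt /\ forall k, card_lt [set j | lt j k] [set: K].

Lemma small_well_order_exists K : exists lt : K -> K -> Prop, small_well_order lt.
Proof.
have [lt0 [tr0 tot0 wf0]] := strict_well_order_exists K.
have [smallK|/existsNP[k0 bigk0]] := pselect (forall k, card_lt [set j | lt0 j k] [set: K]).
  by exists lt0.
have [m bigm minm] : exists2 m, ~ card_lt [set j | lt0 j m] [set: K] &
    forall j, lt0 j m -> card_lt [set i | lt0 i j] [set: K].
  elim/(well_founded_ind wf0): k0 bigk0 => k IH bigk.
  have [minm|/existsNP[j /not_implyP[jk bigj]]] :=
    pselect (forall j, lt0 j k -> card_lt [set i | lt0 i j] [set: K]).
    by exists k.
  exact: IH jk bigj.
have [e em einj] : exists2 e : K -> K, (forall k, lt0 (e k) m) & injective e.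
  apply: (card_le_setT_inj (B := [set j | lt0 j m])); apply: contrapT => nKm.
  by apply: bigm; split=> //; apply: card_leT.
exists (fun i j => lt0 (e i) (e j)); split; first split.
- by move=> i j k; apply: tr0.
- by move=> i j nij; apply: tot0 => /einj.
- exact: wf_inverse_image.
move=> k; apply: card_le_lt_trans (minm _ (em k)).
by apply: (card_le_inj_on (f := e)) => // i j _ _ /einj.
Qed.

Section Upsets.
Context {d : Order.disp_t} {L : porderType d}.

Definition complete_prime_upset (K : Type) (A : K -> set L) (F : set L) :=
  [/\ forall a b, a <= b -> F a -> F b,
      forall (J : Type) (D : J -> L) g, card_lt [set: J] [set: K] ->
        is_glb (range D) g -> (forall j, F (D j)) -> F g &
      forall i u, is_lub (A i) u -> F u -> exists2 a, A i a & F a].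

Lemma upset_representation (K : Type) (A : K -> set L) :
  (forall a b : L, ~ a <= b -> exists2 F, complete_prime_upset A F & F a /\ ~ F b) ->
  exists (X : Type) (f : L -> set X),
    injective f /\
    (forall a b : L, a <= b -> f a `<=` f b) /\
    (forall (J : Type) (D : J -> L) (g : L),
        card_lt [set: J] [set: K] -> is_glb (range D) g ->
        f g = \bigcap_(j in [set: J]) f (D j)) /\
    (forall (i : K) (u : L), is_lub (A i) u -> f u = \bigcup_(a in A i) f a).
Proof.
move=> separate; pose X := {F : set L | complete_prime_upset A F}.
have upX (F : X) a b : a <= b -> sval F a -> sval F b by case: (svalP F) => up _ _; apply: up.
exists X, (fun a => [set F : X | sval F a]); split; [|split; [|split]].
- move=> a b fab; apply: le_anti; apply/andP; split; apply: contrapT.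
    move=> /separate[F FP [Fa nFb]]; apply: nFb.
    by have : [set F : X | sval F a] (exist _ F FP) by []; rewrite fab.
  move=> /separate[F FP [Fb nFa]]; apply: nFa.
  by have : [set F : X | sval F b] (exist _ F FP) by []; rewrite -fab.
- by move=> a b ab F; apply: upX.
- move=> J D g smallJ glbg; apply/seteqP; split=> [F Fg j _|F FD].
    by apply: upX Fg; case: glbg => lbg _; apply: lbg; exists j.
  by case: (svalP F) => _ complete _; apply: complete smallJ glbg (fun j => FD j I).
- move=> i u lubu; apply/seteqP; split=> [F Fu|F [a Aa Fa]].
    by case: (svalP F) => _ _ prime; have [a Aa Fa] := prime i u lubu Fu; exists a.
  by apply: upX Fa; case: lubu => ubu _; apply: ubu.
Qed.

End Upsets.

(* Pullback-stability makes [h `&` _] preserve small unions below u. *)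
Lemma stable_unions_meet_le {d : Order.disp_t} {L : latticeType d} (Lam : Type)
    (S : set L) (u h z : L) :
  has_stable_unions (L := L) Lam -> card_lt S [set: Lam] -> is_lub S u -> h <= u ->
  (forall b, S b -> h `&` b <= z) -> h <= z.
Proof.
move=> stable smallS [ubu lubu] hu hz.
have smallJ : card_lt [set: S] [set: Lam].
  by apply: card_le_lt_trans smallS; have /card_eqPle[] := card_setT S.
have Su (b : S) : val b <= u by apply: ubu; apply: set_mem (valP b).
have [u' [[_ [ubu' _]] meet_union]] := stable _ val u smallJ Su.
have uu' : u <= u' by apply: lubu => b Sb; apply: ubu'; exists (exist _ b (mem_set Sb)).
have [_ [_ lub_meet]] := meet_union h hu.
suff : h `&` u' <= h `&` z by rewrite (meet_l (le_trans hu uu')) lexI => /andP[_ ->].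
apply: lub_meet => [|_ [b _ <-]]; first exact: leIl.
by rewrite lexI leIl hz //; apply: set_mem (valP b).
Qed.

Section SmallWellOrder.
Variables (K : Type) (lt : K -> K -> Prop).
Hypotheses (wo : small_well_order lt) (regK : regular_cardinal K).

Lemma klt_trans i j k : lt i j -> lt j k -> lt i k.
Proof. by case: wo => -[+ _ _] _; apply. Qed.

Lemma klt_total i j : i <> j -> lt i j \/ lt j i.
Proof. by case: wo => -[_ + _] _; apply. Qed.

Lemma klt_wf : well_founded lt.
Proof. by case: wo => -[]. Qed.

Lemma klt_small k : card_lt [set j | lt j k] [set: K].
Proof. by case: wo. Qed.

Lemma klt_irr i : ~ lt i i.
Proof. by elim/(well_founded_ind klt_wf): i => i IH lii; exact: (IH i lii lii). Qed.

Definition kle i j := i = j \/ lt i j.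

Lemma kle_refl i : kle i i. Proof. by left. Qed.

Lemma klt_le i j : lt i j -> kle i j. Proof. by right. Qed.

Lemma kle_trans i j k : kle i j -> kle j k -> kle i k.
Proof. by move=> [->|ij] [<-|jk]; [left|right|right|right; apply: klt_trans jk]. Qed.

Lemma kle_lt_trans i j k : kle i j -> lt j k -> lt i k.
Proof. by move=> [->|ij] jk //; apply: klt_trans jk. Qed.

Lemma klt_le_trans i j k : lt i j -> kle j k -> lt i k.
Proof. by move=> ij [<-|jk] //; apply: klt_trans jk. Qed.

Lemma kle_total i j : kle i j \/ lt j i.
Proof. by have [->|/klt_total[]] := pselect (i = j); [left; left|left; right|right]. Qed.

Lemma klt_nle i j : lt i j -> ~ kle j i.
Proof. by move=> ij ji; apply: (klt_irr (kle_lt_trans ji ij)). Qed.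

Lemma knlt_le i j : ~ lt j i -> kle i j.
Proof. by case: (kle_total i j). Qed.

Lemma kle_anti i j : kle i j -> kle j i -> i = j.
Proof. by move=> [//|ij] /(klt_nle ij). Qed.

Definition is_least (P : K -> Prop) m := P m /\ forall j, P j -> kle m j.

Lemma is_least_unique P m m' : is_least P m -> is_least P m' -> m = m'.
Proof. by move=> [Pm minm] [Pm' minm']; apply: kle_anti; [apply: minm|apply: minm']. Qed.

Lemma exists_least (P : K -> Prop) : (exists k, P k) -> exists m, is_least P m.
Proof.
move=> [k Pk]; elim/(well_founded_ind klt_wf): k Pk => k IH Pk.
have [[j Pj jk]|/forall2NP below] := pselect (exists2 j, P j & lt j k).
  exact: IH jk Pj.
by exists k; split=> // j Pj; apply: knlt_le => jk; have [] := below j.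
Qed.

Definition is_succ p := is_least (lt p).

Lemma succ_exists p : exists s, is_succ p s.
Proof.
apply: exists_least; apply: contrapT => /forallNP top.
have smallp : card_lt [set p] [set: K].
  exact: finite_card_lt (regular_cardinal_infinite regK) (finite_set1 p).
apply: (regular_cardinal_setU regK (klt_small p) smallp).
apply/seteqP; split=> // k _; have [[->|kp]|pk] := kle_total k p.
- by right.
- by left.
- by have := top k.
Qed.

Lemma le_of_lt_succ p s w : is_succ p s -> lt w s -> kle w p.
Proof. by move=> [ps mins] ws; apply: knlt_le => /mins/(klt_le_trans ws)/klt_irr. Qed.

Lemma is_succ_inj p q s : is_succ p s -> is_succ q s -> p = q.
Proof.
move=> ps qs.
by apply: kle_anti; [apply: le_of_lt_succ qs _; case: ps|apply: le_of_lt_succ ps _; case: qs].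
Qed.

Variable z0 : K.

Definition is_limit l := l <> z0 /\ forall p, ~ is_succ p l.

Lemma zero_succ_or_limit l : l = z0 \/ (exists p, is_succ p l) \/ is_limit l.
Proof.
have [->|nz] := pselect (l = z0); first by left.
by have [|/forallNP] := pselect (exists p, is_succ p l); [right; left|right; right].
Qed.

Hypothesis z0_least : forall k, kle z0 k.

Section Runs.
Context {d : Order.disp_t} {L : latticeType d}.
Variables (A : K -> set L) (x y : L).

Definition agree (a : K) (h h' : K -> L) := forall w, kle w a -> h w = h' w.

Definition pending (a : K) (h : K -> L) (i : K) :=
  (exists2 u, is_lub (A i) u & h a <= u) /\
  forall w b, kle w a -> A i b -> ~ h w <= b.

Definition next_value (a : K) (h : K -> L) (v : L) :=
  (exists2 i, is_least (pending a h) i & exists2 b, A i b & v = h a `&` b) \/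
  ((forall i, ~ pending a h i) /\ v = h a).

Lemma pending_agree a h h' : agree a h h' -> pending a h = pending a h'.
Proof.
move=> ag; have ha : h a = h' a by apply: ag; apply: kle_refl.
apply/funext => i; apply/propext; rewrite /pending ha.
by split=> -[hu fresh]; split=> // w b wa; [rewrite -ag|rewrite ag] => //; apply: fresh.
Qed.

Lemma next_value_agree a h h' : agree a h h' -> next_value a h = next_value a h'.
Proof. by move=> ag; rewrite /next_value (pending_agree ag) (ag a (kle_refl a)). Qed.

Lemma next_value_le a h v : next_value a h v -> v <= h a.
Proof. by case=> [[i _ [b _ ->]]|[_ ->]]; [apply: leIl|]. Qed.

Lemma next_value_least a h v i :
  next_value a h v -> is_least (pending a h) i -> exists2 b, A i b & v = h a `&` b.
Proof.
case=> [[j jl vb] il|[none _] [pi _]]; last by case: (none i).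
by rewrite (is_least_unique il jl).
Qed.

Lemma next_value_exists a h : ~ h a <= y -> exists v, next_value a h v.
Proof.
move=> hy; have [[i pi]|/forallNP none] := pselect (exists i, pending a h i); last first.
  by exists (h a); right.
have [m ml] := exists_least (ex_intro _ i pi).
have [[b Ab]|/forallNP noA] := pselect (exists b, A m b).
  by exists (h a `&` b); left; exists m => //; exists b.
case: ml => -[[u [_ lubu] hu] _] _; case: hy; apply: le_trans hu _.
by apply: lubu => b /noA.
Qed.

(* A run up to stage a; it is padded with x beyond a, so that a run is
   determined by its values up to a. *)
Definition run (a : K) (h : K -> L) :=
  [/\ forall w, ~ kle w a -> h w = x, h z0 = x,
      forall w, lt w a -> ~ h w <= y,
      forall p s, is_succ p s -> kle s a -> next_value p h (h s) &
      forall l, is_limit l -> kle l a -> is_glb [set h w | w in [set w | lt w l]] (h l)].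

Definition restr (h : K -> L) (a w : K) : L := if pselect (kle w a) then h w else x.

Lemma restrE h a w : kle w a -> restr h a w = h w.
Proof. by rewrite /restr; case: pselect. Qed.

Lemma restrN h a w : ~ kle w a -> restr h a w = x.
Proof. by rewrite /restr; case: pselect. Qed.

Lemma agree_restr h a b : kle b a -> agree b h (restr h a).
Proof. by move=> ba w wb; rewrite restrE //; apply: kle_trans wb ba. Qed.

Lemma run_restr b h a : run b h -> kle a b -> run a (restr h a).
Proof.
move=> [_ h0 fresh succ lim] ab; split.
- by move=> w; apply: restrN.
- by rewrite restrE.
- by move=> w wa; rewrite restrE; [apply: fresh; apply: klt_le_trans ab|apply: klt_le].
- move=> p s ps sa; rewrite restrE // -(next_value_agree (agree_restr _ _)).
    exact: succ ps (kle_trans sa ab).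
  by apply: klt_le; apply: klt_le_trans sa; case: ps.
- move=> l ll la; rewrite restrE // -(eq_imagel (f := h)); first exact: lim (kle_trans la ab).
  by move=> w wl; rewrite restrE //; apply: klt_le; apply: klt_le_trans la.
Qed.

Lemma run_of_prefix a h :
  (forall w, ~ kle w a -> h w = x) -> h z0 = x -> (forall w, lt w a -> ~ h w <= y) ->
  (forall b, lt b a -> run b (restr h b)) ->
  (forall p, is_succ p a -> next_value p h (h a)) ->
  (is_limit a -> is_glb [set h w | w in [set w | lt w a]] (h a)) ->
  run a h.
Proof.
move=> above h0 fresh prefix top_succ top_lim; split=> //.
- move=> p s ps [sa|sa]; first by subst s; apply: top_succ.
  have [_ _ _ succ _] := prefix s sa.
  have ag : agree p h (restr h s) by apply: agree_restr; apply: klt_le; case: ps.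
  by rewrite (next_value_agree ag) -(restrE h (kle_refl s)); apply: succ (kle_refl s).
- move=> l ll [la|la]; first by subst l; apply: top_lim.
  have [_ _ _ _ lim] := prefix l la; have := lim l ll (kle_refl l).
  rewrite restrE; last exact: kle_refl.
  by rewrite (eq_imagel (f' := h)) // => w wl; rewrite restrE //; apply: klt_le.
Qed.

Lemma run_antitone a h v w : run a h -> kle v w -> kle w a -> h w <= h v.
Proof.
move=> [_ _ _ succ lim]; elim/(well_founded_ind klt_wf): w v => w IH v [<-//|vw] wa.
have [w0|[[p pw]|lw]] := zero_succ_or_limit w.
- by subst w; case: (klt_nle vw (z0_least v)).
- apply: le_trans (next_value_le (succ _ _ pw wa)) _.
  have pw' : lt p w by case: pw.
  by apply: IH pw' _ (le_of_lt_succ pw vw) (kle_trans (klt_le pw') wa).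
- by have [lb _] := lim w lw wa; apply: lb; exists v.
Qed.

Record node := Node { level : K; trace : K -> L; traceP : run level trace }.

Definition value (t : node) := trace t (level t).

Definition node_lt (s t : node) :=
  lt (level s) (level t) /\ agree (level s) (trace s) (trace t).

Lemma node_ext s t : level s = level t -> agree (level s) (trace s) (trace t) -> s = t.
Proof.
case: s t => [a h runh] [b h' runh'] /= ab ag; subst b.
have hh' : h = h'.
  apply/funext => w; have [|wa] := pselect (kle w a); first exact: ag.
  by case: runh runh' => [above _ _ _ _] [above' _ _ _ _]; rewrite above // above'.
by subst h'; congr Node; apply: Prop_irrelevance.
Qed.

Definition restr_node t a (ta : kle a (level t)) := Node (run_restr (traceP t) ta).

Lemma restr_node_lt t a (ta : lt a (level t)) : node_lt (restr_node (klt_le ta)) t.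
Proof. by split=> //= w wa; rewrite restrE. Qed.

Lemma value_restr_node t a (ta : kle a (level t)) : value (restr_node ta) = trace t a.
Proof. by rewrite /value /= restrE //; apply: kle_refl. Qed.

Lemma run_root : run z0 (fun=> x).
Proof.
split=> //.
- by move=> w wz; case: (klt_nle wz (z0_least w)).
- move=> p s [ps _] /kle_anti/(_ (z0_least s)) s0; subst s.
  by case: (klt_nle ps (z0_least p)).
- by move=> l [l0 _] /kle_anti/(_ (z0_least l)).
Qed.

Definition root := Node run_root.

Lemma node_lt_trans r s t : node_lt r s -> node_lt s t -> node_lt r t.
Proof.
move=> [rs ag_rs] [st ag_st]; split; first exact: klt_trans st.
by move=> w wr; rewrite ag_rs // ag_st //; apply: kle_trans wr (klt_le rs).
Qed.

Lemma node_lt_total s t : level s <> level t -> (forall w, kle w (level s) -> kle w (level t) ->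
  trace s w = trace t w) -> node_lt s t \/ node_lt t s.
Proof.
move=> /klt_total[st|ts] ag; [left|right]; split=> // w wl; rewrite ag //.
- by apply: kle_trans wl (klt_le st).
- by apply: kle_trans wl (klt_le ts).
Qed.

Lemma node_tree : rooted_tree node_lt root.
Proof.
split; [|split; [|split; [|split]]].
- by move=> t [/klt_irr].
- exact: node_lt_trans.
- move=> t; have root_agree : agree z0 (trace root) (trace t).
    by move=> w /kle_anti/(_ (z0_least w)) ->; case: (traceP t) => _ ->.
  have [t0|t0] := z0_least (level t); [left|by right].
  by apply: node_ext => //= w; rewrite -t0 => w0; symmetry; apply: root_agree.
- move=> t s s' [st ag] [s't ag'].
  have [ss'|nss'] := pselect (level s = level s').
    by left; apply: node_ext => // w ws; rewrite ag // ag' // -ss'.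
  by right; apply: node_lt_total => // w ws ws'; rewrite ag ?ag'.
- apply: (wf_incl _ _ (fun s t => lt (level s) (level t))); first by move=> s t [].
  exact: wf_inverse_image klt_wf.
Qed.

Lemma value_antitone s t : node_lt t s -> value s <= value t.
Proof.
move=> [ts ag]; rewrite /value (ag _ (kle_refl _)).
exact: run_antitone (traceP s) (klt_le ts) (kle_refl _).
Qed.

Section Extension.
Variables (t : node) (s : K) (v : L).
Hypotheses (ts : is_succ (level t) s) (tv : next_value (level t) (trace t) v).
Hypothesis ty : ~ value t <= y.

Definition extend_trace (w : K) : L :=
  if pselect (kle w (level t)) then trace t w else if pselect (w = s) then v else x.

Lemma extend_traceE w : kle w (level t) -> extend_trace w = trace t w.
Proof. by rewrite /extend_trace; case: pselect. Qed.

Lemma extend_trace_succ : extend_trace s = v.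
Proof.
rewrite /extend_trace; destruct (pselect (kle s (level t))) as [st|nst].
  by case: (klt_nle (proj1 ts) st).
by destruct (pselect (s = s)).
Qed.

Lemma run_extend : run s extend_trace.
Proof.
have lts : lt (level t) s by case: ts.
apply: run_of_prefix.
- move=> w ws; rewrite /extend_trace; case: pselect => [wt|nwt].
    by case: ws; right; apply: kle_lt_trans wt lts.
  by case: pselect => // ws'; case: ws; left.
- by rewrite extend_traceE; [case: (traceP t)|apply: z0_least].
- move=> w /(le_of_lt_succ ts) wt; rewrite extend_traceE //.
  by case: wt => [->//|]; case: (traceP t) => _ _ + _ _; apply.
- move=> b /(le_of_lt_succ ts) bt.
  have -> : restr extend_trace b = restr (trace t) b.
    apply/funext => w; rewrite /restr; case: pselect => // wb.
    by rewrite extend_traceE //; apply: kle_trans wb bt.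
  exact: run_restr (traceP t) bt.
- move=> p /(is_succ_inj ts) <-; rewrite extend_trace_succ.
  by rewrite (next_value_agree extend_traceE).
- by case=> _ /(_ (level t)).
Qed.

Definition extend_node := Node run_extend.

Lemma extend_node_imm_succ : imm_succ node_lt t extend_node.
Proof.
split; first by split; [case: ts|move=> w wt /=; rewrite extend_traceE].
by move=> [u [[tu _] [us _]]]; apply: (klt_nle us); case: ts => _; apply.
Qed.

Lemma value_extend_node : value extend_node = v.
Proof. exact: extend_trace_succ. Qed.

End Extension.

Lemma imm_succ_is_succ t s : imm_succ node_lt t s -> is_succ (level t) (level s).
Proof.
move=> [[ts ag] between]; split=> // j tj; apply: knlt_le => js.
apply: between; exists (restr_node (klt_le js)); split; last exact: restr_node_lt.
by split=> //= w wt; rewrite ag ?restrE //; apply: kle_trans wt (klt_le tj).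
Qed.

Lemma imm_succ_next_value t s :
  imm_succ node_lt t s -> next_value (level t) (trace t) (value s).
Proof.
move=> ts; have [[_ ag] _] := ts; rewrite (next_value_agree ag).
by case: (traceP s) => _ _ _ succ _; apply: succ (imm_succ_is_succ ts) (kle_refl _).
Qed.

Lemma imm_succ_value_inj t s s' :
  imm_succ node_lt t s -> imm_succ node_lt t s' -> value s = value s' -> s = s'.
Proof.
move=> ts ts' ss'; have tss := imm_succ_is_succ ts.
have ll' : level s = level s' by apply: is_least_unique tss (imm_succ_is_succ ts').
have [[_ ag] _] := ts; have [[_ ag'] _] := ts'.
apply: node_ext => // w [->|ws]; first by move: ss'; rewrite /value ll'.
by have wt := le_of_lt_succ tss ws; rewrite -ag // -ag'.
Qed.

Section Branch.
Variable B : set node.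
Hypothesis B_branch : is_branch node_lt B.

Lemma branch_maximal t : (forall b, B b -> node_lt b t) -> B t.
Proof. by move=> below; case: B_branch => _; apply=> b /below; right; right. Qed.

Lemma branch_down s t : B t -> node_lt s t -> B s.
Proof.
move=> Bt st; case: B_branch => chain maximal; apply: maximal => b Bb.
have [_ [_ [_ [linear _]]]] := node_tree.
have [<-|[tb|bt]] := chain _ _ Bt Bb; first by right; left.
  by right; left; apply: node_lt_trans st tb.
exact: linear st bt.
Qed.

Lemma branch_root : B root.
Proof.
case: B_branch => _; apply=> b _; have [_ [_ [root_least _]]] := node_tree.
by have [->|rb] := root_least b; [left|right; left].
Qed.

Lemma branch_level_inj s t : B s -> B t -> level s = level t -> s = t.
Proof.
move=> Bs Bt st; case: B_branch => chain _.
by case: (chain _ _ Bs Bt) => [//|[[]|[]]]; rewrite st => /klt_irr.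
Qed.

Definition attained a := exists2 t, B t & level t = a.

Lemma branch_lt_unattained t a : B t -> ~ attained a -> lt (level t) a.
Proof.
move=> Bt na; have [[ta|//]|a_t] := kle_total (level t) a; first by case: na; exists t.
by case: na; exists (restr_node (klt_le a_t)) => //; apply: branch_down Bt (restr_node_lt a_t).
Qed.

Definition branch_trace (w : K) : L :=
  xget x [set v | exists2 t, B t & level t = w /\ value t = v].

Lemma branch_traceE t w : B t -> kle w (level t) -> branch_trace w = trace t w.
Proof.
move=> Bt wt.
have [u Bu [uw ut]] : exists2 u, B u & level u = w /\ value u = trace t w.
  case: wt => [->|wt]; first by exists t.
  exists (restr_node (klt_le wt)); last by rewrite value_restr_node.
  exact: branch_down Bt (restr_node_lt wt).
apply: xget_unique => [|v [u' Bu' [u'w <-]]]; first by exists u.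
by rewrite (branch_level_inj Bu' Bu) // u'w.
Qed.

Lemma restr_branch_trace t : B t -> restr branch_trace (level t) = trace t.
Proof.
move=> Bt; apply/funext => w; rewrite /restr; case: pselect => [wt|nwt].
  exact: branch_traceE.
by case: (traceP t) => above _ _ _ _; rewrite above.
Qed.

Lemma branch_extension t : (forall b, B b -> lt (level b) (level t)) ->
  (forall w, lt w (level t) -> trace t w = branch_trace w) -> B t.
Proof.
move=> below tB; apply: branch_maximal => b Bb; split; first exact: below.
by move=> w wb; rewrite -(branch_traceE Bb wb) tB //; apply: kle_lt_trans wb (below _ Bb).
Qed.

Lemma branch_continuous t : B t -> limit_position node_lt root t ->
  is_glb [set value s | s in [set s | B s /\ node_lt s t]] (value t).
Proof.
move=> Bt [tr between]; have [_ [_ [root_least _]]] := node_tree.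
have tl : is_limit (level t).
  split=> [t0|p pt].
    by case: (root_least t) => [/tr[]|[rt _]]; rewrite t0 in rt; apply: klt_irr rt.
  have [u [[pu _] [ut _]]] := between _ (restr_node_lt (proj1 pt)).
  by apply: (klt_nle ut); apply: (proj2 pt).
have [_ _ _ _ lim] := traceP t.
suff -> : [set value s | s in [set s | B s /\ node_lt s t]] =
    [set trace t w | w in [set w | lt w (level t)]] by apply: lim tl (kle_refl _).
apply/seteqP; split=> [_ [s [Bs [st ag]] <-]|_ [w wt <-]].
  by exists (level s) => //; rewrite /value ag //; apply: kle_refl.
exists (restr_node (klt_le wt)); last exact: value_restr_node.
by split; [apply: branch_down Bt (restr_node_lt wt)|apply: restr_node_lt].
Qed.

Section LimitNode.
Variables (l : K) (c : L).
Hypotheses (ll : is_limit l) (below : forall b, B b -> lt (level b) l).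
Hypotheses (prefix : forall w, lt w l -> attained w) (By : forall b, B b -> ~ value b <= y).
Hypothesis glbc : is_glb [set value b | b in B] c.

Definition limit_trace (w : K) : L :=
  if pselect (lt w l) then branch_trace w else if pselect (w = l) then c else x.

Lemma limit_traceE w : lt w l -> limit_trace w = branch_trace w.
Proof. by rewrite /limit_trace; case: pselect. Qed.

Lemma run_limit : run l limit_trace.
Proof.
have valueB w : lt w l -> exists2 t, B t & level t = w /\ branch_trace w = value t.
  move=> /prefix[t Bt <-]; exists t => //; split=> //.
  by rewrite (branch_traceE Bt) //; apply: kle_refl.
apply: run_of_prefix.
- move=> w wl; rewrite /limit_trace; case: pselect => [wl'|nwl]; first by case: wl; right.
  by case: pselect => // w_l; case: wl; left.
- have z0l : lt z0 l by case: (z0_least l) => // l0; case: ll => /(_ (esym l0)).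
  by rewrite limit_traceE // (branch_traceE branch_root) //; apply: kle_refl.
- by move=> w wl; rewrite limit_traceE //; have [t Bt [_ ->]] := valueB w wl; apply: By.
- move=> b /[dup] bl /prefix[t Bt tb]; subst b.
  suff -> : restr limit_trace (level t) = trace t by apply: traceP.
  rewrite -(restr_branch_trace Bt); apply/funext => w; rewrite /restr.
  by case: pselect => // wt; rewrite limit_traceE //; apply: kle_lt_trans wt bl.
- by move=> p; case: ll => _ /(_ p).
- move=> _; have -> : limit_trace l = c.
    by rewrite /limit_trace; case: pselect => [/klt_irr//|nll]; case: pselect => // /(_ erefl).
  suff -> : [set limit_trace w | w in [set w | lt w l]] = [set value b | b in B] by [].
  apply/seteqP; split=> [_ [w wl <-]|_ [b Bb <-]].
    by have [t Bt [tw tv]] := valueB w wl; exists t => //; rewrite limit_traceE.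
  exists (level b); first exact: below.
  by rewrite limit_traceE ?(branch_traceE Bb) //; [apply: kle_refl|apply: below].
Qed.

Definition limit_node := Node run_limit.

End LimitNode.

(* Otherwise the least level missed by the branch could be filled, by a
   successor step or by the branch limit, contradicting maximality. *)
Lemma branch_glb_le c : (exists a, ~ attained a) -> is_glb [set value b | b in B] c -> c <= y.
Proof.
move=> gap glbc; apply: contrapT => cy.
have By b : B b -> ~ value b <= y.
  move=> Bb b_y; apply: cy; apply: le_trans b_y.
  by case: glbc => lbc _; apply: lbc; exists b.
have [l [ul minl]] := exists_least gap.
have below b : B b -> lt (level b) l by move=> Bb; apply: branch_lt_unattained.
have prefix w : lt w l -> attained w by move=> wl; apply: contrapT => /minl/(klt_nle wl).
apply: ul; have [->|[[p pl]|ll]] := zero_succ_or_limit l.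
- by exists root; first exact: branch_root.
- have [tp Btp tpp] := prefix p (proj1 pl); subst p.
  have [v tpv] := next_value_exists (By _ Btp).
  exists (extend_node pl tpv (By _ Btp)) => //.
  apply: branch_extension => [b /below//|w wl /=].
  by rewrite extend_traceE ?(branch_traceE Btp) //; apply: le_of_lt_succ pl wl.
- exists (limit_node ll below prefix By glbc) => //.
  by apply: branch_extension => [b /below//|w wl /=]; rewrite limit_traceE.
Qed.

End Branch.

Section RunUpset.
Variable H : K -> L.
Hypothesis Hrun : forall a, run a (restr H a).

Lemma full_run_antitone v w : kle v w -> H w <= H v.
Proof.
move=> vw; rewrite -(restrE H vw) -(restrE H (kle_refl w)).
exact: run_antitone (Hrun w) vw (kle_refl w).
Qed.

Lemma full_run_zero : H z0 = x.
Proof. by have [_ <- _ _ _] := Hrun z0; rewrite restrE //; apply: kle_refl. Qed.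

Lemma full_run_not_le a : ~ H a <= y.
Proof.
have [s sa] := succ_exists a; have [_ _ fresh _ _] := Hrun s.
by rewrite -(restrE H (klt_le (proj1 sa))); apply: fresh; case: sa.
Qed.

Lemma full_run_next p s : is_succ p s -> next_value p H (H s).
Proof.
move=> ps; have [_ _ _ succ _] := Hrun s.
have ag : agree p H (restr H s).
  by apply: agree_restr; apply: klt_le; case: ps.
by rewrite (next_value_agree ag) -(restrE H (kle_refl s)); apply: succ (kle_refl s).
Qed.

Lemma least_pending_neq b b' j j' : lt b b' ->
  is_least (pending b H) j -> is_least (pending b' H) j' -> j <> j'.
Proof.
move=> bb' jl [[_ fresh] _] jj'; subst j'.
have [s bs] := succ_exists b.
have [c Ac Hs] := next_value_least (full_run_next bs) jl.
by apply: (fresh s c) => //; [case: bs => _; apply|rewrite Hs leIr].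
Qed.

(* The least pending index at a stage is never pending later, so the stages
   after a0 would inject into the indices up to i. *)
Lemma pending_not_forever i a0 : ~ (forall b, kle a0 b -> pending b H i).
Proof.
move=> always.
have /choice[g gP] : forall b, exists j, kle a0 b -> is_least (pending b H) j.
  move=> b; have [a0b|na0b] := pselect (kle a0 b); last by exists i.
  by have [j jl] := exists_least (ex_intro _ i (always b a0b)); exists j.
have [si isi] := succ_exists i.
apply: (regular_cardinal_setU regK (klt_small a0) (Q := [set b | kle a0 b])).
  apply: card_le_lt_trans (klt_small si).
  apply: (card_le_inj_on (f := g)) => [b a0b|b b'].
    by apply: kle_lt_trans (proj2 (gP b a0b) i (always b a0b)) (proj1 isi).
  rewrite !inE => a0b a0b' gbb'; apply: contrapT => /klt_total[] bb'.
    exact: least_pending_neq bb' (gP _ a0b) (gP _ a0b') gbb'.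
  exact: least_pending_neq bb' (gP _ a0b') (gP _ a0b) (esym gbb').
by apply/seteqP; split=> // b _; have [|] := kle_total a0 b; [right|left].
Qed.

Definition run_upset : set L := [set z | exists a, H a <= z].

Lemma run_upset_complete (J : Type) (D : J -> L) g : card_lt [set: J] [set: K] ->
  is_glb (range D) g -> (forall j, run_upset (D j)) -> run_upset g.
Proof.
move=> smallJ [_ glb] /choice[f Hf].
have [k kf] := regular_cardinal_bounded regK smallJ (fun j => klt_small (f j)).
exists k; apply: glb => _ [j _ <-]; apply: le_trans (Hf j).
by apply: full_run_antitone; apply: knlt_le; apply: kf.
Qed.

Lemma run_upset_prime i u : is_lub (A i) u -> run_upset u -> exists2 a, A i a & run_upset a.
Proof.
move=> lubu [a0 Hu]; apply: contrapT => none.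
apply: (pending_not_forever (i := i) (a0 := a0)) => b a0b; split.
  by exists u => //; apply: le_trans (full_run_antitone a0b) Hu.
by move=> w c _ Ac Hw; apply: none; exists c => //; exists w.
Qed.

Lemma run_upset_separates : exists2 F, complete_prime_upset A F & F x /\ ~ F y.
Proof.
exists run_upset; first split.
- by move=> a b ab [w Hw]; exists w; apply: le_trans ab.
- exact: run_upset_complete.
- exact: run_upset_prime.
split; first by exists z0; rewrite full_run_zero.
by move=> [a Hay]; apply: (full_run_not_le (a := a)).
Qed.

End RunUpset.

Section Coherence.
Variable Lam : Type.
Hypotheses (regLam : regular_cardinal Lam) (smallA : forall i, card_lt (A i) [set: Lam]).
Hypothesis stable : has_stable_unions (L := L) Lam.

Lemma next_values_small a h : card_lt [set v | next_value a h v] [set: Lam].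
Proof.
have [[i pi]|/forallNP none] := pselect (exists i, pending a h i); last first.
  have smallh := finite_card_lt (regular_cardinal_infinite regLam) (finite_set1 (h a)).
  apply: card_le_lt_trans smallh.
  by apply: subset_card_le => v [[i [/none]]|[_ ->]].
have [m ml] := exists_least (ex_intro _ i pi).
apply: card_le_lt_trans (card_le_trans _ (card_image_le (Order.meet (h a)) (A m))) (smallA m).
by apply: subset_card_le => v /next_value_least/(_ ml)[b Ab ->]; exists b.
Qed.

Lemma next_values_cover a h m : (forall v, next_value a h v -> v <= m) -> h a <= m.
Proof.
move=> below.
have [[i pi]|/forallNP none] := pselect (exists i, pending a h i); last by apply: below; right.
have [j jl] := exists_least (ex_intro _ i pi); have [[[u lubu hu] _] _] := jl.
apply: stable_unions_meet_le stable (smallA j) lubu hu _ => b Ab.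
by apply: below; left; exists j => //; exists b.
Qed.

Lemma imm_succ_condition t : (exists s, imm_succ node_lt t s) ->
  card_lt [set s | imm_succ node_lt t s] [set: Lam] /\
  extremal_epi [set value s | s in [set s | imm_succ node_lt t s]] (value t).
Proof.
move=> [s0 ts0].
have ty : ~ value t <= y.
  have [[t_s0 ag] _] := ts0; rewrite /value (ag _ (kle_refl _)).
  by case: (traceP s0) => _ _ fresh _ _; apply: fresh t_s0.
split.
  apply: card_le_lt_trans (next_values_small (level t) (trace t)).
  apply: (card_le_inj_on (f := value)) => [s /imm_succ_next_value//|s s'].
  by rewrite !inE; apply: imm_succ_value_inj.
move=> m mt below; apply/le_anti; rewrite mt /=; apply: next_values_cover => v tv.
have [s ts] := succ_exists (level t); apply: below.
by exists (extend_node ts tv ty); [apply: extend_node_imm_succ|apply: value_extend_node].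
Qed.

Hypothesis cotree : cotree_condition L K Lam.

Lemma full_run_exists : ~ x <= y -> exists H, forall a, run a (restr H a).
Proof.
move=> xy; apply: contrapT => nofull.
have gap B : is_branch node_lt B -> exists a, ~ attained B a.
  move=> Bbr; apply: contrapT => /forallNP attained_all; apply: nofull.
  exists (branch_trace B) => a; have [t Bt <-] := contrapT (attained_all a).
  by rewrite restr_branch_trace //; apply: traceP.
have small B : is_branch node_lt B -> card_lt B [set: K].
  move=> Bbr; have [a na] := gap B Bbr; apply: card_le_lt_trans (klt_small a).
  apply: (card_le_inj_on (f := level)) => [t Bt|s t].
    exact: (branch_lt_unattained Bbr Bt na).
  by rewrite !inE; apply: branch_level_inj.
have extremal := cotree node_tree value_antitone imm_succ_condition small branch_continuous.
have xyx : x `&` y = x.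
  apply: extremal => [|c [B [Bbr glbc]]]; first exact: leIl.
  rewrite lexI (branch_glb_le Bbr (gap B Bbr) glbc) andbT.
  by case: glbc => lbc _; apply: lbc; exists root => //; apply: branch_root.
by apply: xy; rewrite -xyx leIr.
Qed.

Lemma separating_upset_exists : ~ x <= y ->
  exists2 F, complete_prime_upset A F & F x /\ ~ F y.
Proof. by move=> /full_run_exists[H Hrun]; apply: run_upset_separates Hrun. Qed.

End Coherence.
End Runs.
End SmallWellOrder.

Theorem mainTheorem5 (K Lam : Type) (d : Order.disp_t)
    (L : distrLatticeType d) (A : K -> set L) :
  regular_cardinal K -> regular_cardinal Lam ->
  [set: K] #<= [set: Lam] ->
  coherent L Lam K ->
  (forall i, card_lt (A i) [set: Lam]) ->
  exists (X : Type) (f : L -> set X),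
    injective f /\
    (forall x y : L, x <= y -> f x `<=` f y) /\
    (forall (J : Type) (D : J -> L) (g : L),
        card_lt [set: J] [set: K] -> is_glb (range D) g ->
        f g = \bigcap_(j in [set: J]) f (D j)) /\
    (forall (i : K) (u : L), is_lub (A i) u ->
        f u = \bigcup_(a in A i) f a).
Proof.
move=> regK regLam _ [_ [_ [stable cotree]]] smallA.
have [lt wo] := small_well_order_exists K.
have [k _] := infinite_setN0 (regular_cardinal_infinite regK).
have [z0 [_ z0_least]] := exists_least wo (ex_intro (fun=> True) k I).
apply: upset_representation => a b ab.
have z0_bottom k' : kle lt z0 k' by apply: z0_least.
exact (separating_upset_exists wo regK z0_bottom regLam smallA stable cotree ab).
Qed.
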